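(* Let $X$ be a metric space and $x\in X$. Assume (a) there exist constants $c\ge1$, $a\in(0,1]$ such that for all $r\le a$, $\lambda,\mu\le1$ and $y,z\in B_X(x,r)$, $n(\lambda\mu r,B_X(y,\lambda r))\le c\,n(\lambda\mu r,B_X(z,\lambda r))$; and (b) $\limsup_{r\to0}n_{\lambda r}(\overline{B}_X(x,r))<\infty$ for all $\lambda>0$. Define $g(t,h)=\log n(e^{-(t+h)},B_X(x,e^{-t}))$ and $dg(t,h,k)=g(t,h+k)-g(t+h,k)-g(t,h)$. Then there is $t_0$ such that $dg$ is bounded on $\{(t,h,k):t>t_0,\ h,k>0\}$.
   Context: $B_X(x,r)$ is the open ball, $\overline{B}_X(x,r)$ the closed ball; $n(s,A)=n_s(A)$ is the minimum number of open balls of radius $s$ needed to cover $A$. *)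

From HB Require Import structures.
From mathcomp Require Import all_boot all_order all_algebra.
From mathcomp Require Import all_classical all_reals all_analysis.
Set Implicit Arguments. Unset Strict Implicit. Unset Printing Implicit Defensive.
Import Order.TTheory GRing.Theory Num.Theory.
Local Open Scope classical_set_scope.
Local Open Scope ring_scope.

Definition oball {R : realType} {T : metricType R} (x : T) (r : R) : set T :=
  [set y | mdist x y < r].

Definition cball {R : realType} {T : metricType R} (x : T) (r : R) : set T :=
  [set y | mdist x y <= r].

Definition covered_by {R : realType} {T : metricType R} (s : R) (A : set T) (N : nat) : Prop :=
  exists c : 'I_N -> T, A `<=` \bigcup_(i in [set: 'I_N]) oball (c i) s.

(* n(s,A): minimum number of open balls of radius s covering A; +oo if none *)
Definition covnum {R : realType} {T : metricType R} (s : R) (A : set T) : \bar R :=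
  ereal_inf [set (N%:R)%:E | N in [set N : nat | covered_by s A N]].

Definition gfun {R : realType} {T : metricType R} (x : T) (t h : R) : \bar R :=
  lne (covnum (expR (- (t + h))) (oball x (expR (- t)))).

Definition dgfun {R : realType} {T : metricType R} (x : T) (t h k : R) : \bar R :=
  (gfun x t (h + k) - gfun x (t + h) k - gfun x t h)%E.

From Pilot Require Import Defs.
From HB Require Import structures.
From mathcomp Require Import all_boot all_order all_algebra.
From mathcomp Require Import all_classical all_reals all_analysis.
From mathcomp Require Import lra ring.
Set Implicit Arguments. Unset Strict Implicit. Unset Printing Implicit Defensive.
Import Order.TTheory GRing.Theory Num.Theory.
Local Open Scope classical_set_scope.
Local Open Scope ring_scope.

(* Write r = e^-t, sig = e^-(t+h) and s = e^-(t+h+k), so that dg is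
   log n(s, B(x,r)) - log n(s, B(x,sig)) - log n(sig, B(x,r)); it suffices to bound
   n(s, B(x,r)) / (n(sig, B(x,r)) n(s, B(x,sig))) above and below by positive constants
   once r is small.
   Upper bound: cover B(x,r) by n(sig, B(x,r)) balls B(p,sig) with p in B(x,2r) and
   cover each of them, using (a), by c n(s, B(x,sig)) balls of radius s.
   Lower bound: (b) with lambda = 1/2 and (a) give the doubling estimate
   n(s, B(x,rho)) <= M c n(s, B(x,rho/2)), which also shows that all these covering
   numbers are finite.  A maximal 2 sig-separated set P in B(x,r/2) is a 2 sig-net, so
   n(sig, B(x,r)) <= M^2 c^2 |P|; and the balls B(p,sig/2), p in P, are so far apart
   that a cover of B(x,r) by balls of radius s splits into |P| disjoint covers of
   them, each of size at least n(s, B(x,sig)) / (M c^2). *)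

Lemma count_le1_uniq (I : eqType) (a : pred I) (P : seq I) :
  uniq P -> {in P &, forall p q, a p -> a q -> p = q} -> (count a P <= 1)%N.
Proof.
move=> uP a_inj; rewrite -size_filter.
case Ea: [seq p <- P | a p] => [//|p0 P0].
have p0P : p0 \in [seq p <- P | a p] by rewrite Ea mem_head.
rewrite -Ea; apply: (@uniq_leq_size _ _ [:: p0]); first exact: filter_uniq.
move=> q; rewrite !mem_filter in p0P * => /andP[aq qP] /=.
by move: p0P => /andP[ap0 p0P]; rewrite inE (a_inj q p0).
Qed.

Lemma sum_count_le_size (I : eqType) (U : Type) (P : seq I) (Q : I -> pred U) (l : seq U) :
  uniq P -> (forall u, {in P &, forall p q, Q p u -> Q q u -> p = q}) ->
  (\sum_(p <- P) count (Q p) l <= size l)%N.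
Proof.
move=> uP Q_inj; rewrite -sum1_size.
under eq_bigr => p _ do rewrite -sum1_count big_mkcond.
rewrite exchange_big /=; apply: leq_sum => u _.
by rewrite -big_mkcond sum1_count; apply: count_le1_uniq => // p q; apply: Q_inj.
Qed.

Lemma norm_ln_quotient_le (R : realType) (u v w c K : R) : 0 < u -> 0 < v -> 0 < w ->
  u <= c * (v * w) -> v * w <= K * u -> `|ln u - ln v - ln w| <= `|ln c| + `|ln K|.
Proof.
move=> u_gt0 v_gt0 w_gt0 u_le vw_le; have vw_gt0 : 0 < v * w by rewrite mulr_gt0.
have c_gt0 : 0 < c by rewrite -(pmulr_lgt0 _ vw_gt0) (lt_le_trans u_gt0).
have K_gt0 : 0 < K by rewrite -(pmulr_lgt0 _ u_gt0) (lt_le_trans vw_gt0).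
have ln_u_le : ln u <= ln c + (ln v + ln w).
  by rewrite -!lnM ?posrE ?mulr_gt0 // ler_ln ?posrE ?mulr_gt0.
have ln_vw_le : ln v + ln w <= ln K + ln u.
  by rewrite -!lnM ?posrE ?mulr_gt0 // ler_ln ?posrE ?mulr_gt0.
have := ler_norm (ln c); have := ler_norm (ln K).
have : - ln c <= `|ln c| by rewrite -normrN ler_norm.
have : - ln K <= `|ln K| by rewrite -normrN ler_norm.
by rewrite ler_norml; move=> *; apply/andP; split; lra.
Qed.

Section CoveringNumbers.
Variables (R : realType) (T : metricType R).
Implicit Types (s K : R) (A B : set T) (l : seq T).

Definition covers s A l := forall w, A w -> has (fun c => mdist c w < s) l.

Lemma covered_byP s A N : Defs.covered_by s A N <-> exists2 l, size l = N & covers s A l.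
Proof.
split=> [[c Ac]|[l <- cover_l]].
- exists [seq c i | i <- enum 'I_N]; first by rewrite size_map size_enum_ord.
  move=> w /Ac[i _ ciw]; apply/hasP; exists (c i) => //.
  by apply: map_f; rewrite mem_enum.
- case: l cover_l => [|c0 l] cover_l.
    by exists (fun i : 'I_0 => False_rect T (notF (ltn_ord i))) => w /cover_l.
  exists (fun i : 'I_(size (c0 :: l)) => nth c0 (c0 :: l) i) => w /cover_l /hasP[c cl cw].
  have ci : (index c (c0 :: l) < size (c0 :: l))%N by rewrite index_mem.
  by exists (Ordinal ci) => //=; rewrite /oball /= nth_index.
Qed.

Lemma covnum_le_size s A l : covers s A l -> (covnum s A <= (size l)%:R%:E)%E.
Proof.
by move=> cover_l; apply: ereal_inf_lbound; exists (size l) => //; apply/covered_byP; exists l.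
Qed.

Lemma covnum_ge0 s A : (0 <= covnum s A)%E.
Proof. by apply: le_ereal_inf_tmp => _ [N _ <-]; rewrite lee_fin ler0n. Qed.

Lemma covnum_attained s A K : (covnum s A <= K%:E)%E ->
  exists2 l, covers s A l & covnum s A = (size l)%:R%:E.
Proof.
move=> le_K; have /ereal_inf_lt[_ [N /covered_byP[l0 _ cover_l0] <-] _] :
    (covnum s A < (K + 1)%:E)%E by apply: le_lt_trans le_K _; rewrite lte_fin ltrDl.
pose coverable n := `[< exists2 l, size l = n & covers s A l >].
have [|n /asboolP[l <- cover_l] l_min] := ex_minnP (ex_intro coverable (size l0) _).
  by apply/asboolP; exists l0.
exists l => //; apply/eqP; rewrite eq_le covnum_le_size //=.
apply: le_ereal_inf_tmp => _ [N' /covered_byP[l' <- cover_l'] <-].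
by rewrite lee_fin ler_nat; apply: l_min; apply/asboolP; exists l'.
Qed.

Lemma covnum_leP s A K :
  (covnum s A <= K%:E)%E <-> exists2 l, covers s A l & (size l)%:R <= K.
Proof.
split=> [/[dup] le_K /covnum_attained[l cover_l E]|[l cover_l le_K]].
  by exists l => //; rewrite -lee_fin -E.
by apply: (le_trans (covnum_le_size cover_l)); rewrite lee_fin.
Qed.

Lemma covnumS s A B : A `<=` B -> (covnum s A <= covnum s B)%E.
Proof.
move=> AB; apply: le_ereal_inf_tmp => _ [N /covered_byP[l <- cover_l] <-].
by apply: covnum_le_size => w /AB /cover_l.
Qed.

Lemma le_covnum_radius s s' A : s <= s' -> (covnum s' A <= covnum s A)%E.
Proof.
move=> ss'; apply: le_ereal_inf_tmp => _ [N /covered_byP[l <- cover_l] <-].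
apply: covnum_le_size => w /cover_l /hasP[c cl cw].
by apply/hasP; exists c => //; apply: lt_le_trans ss'.
Qed.

Lemma covnumU_le s A B K1 K2 : (covnum s A <= K1%:E)%E -> (covnum s B <= K2%:E)%E ->
  (covnum s (A `|` B) <= (K1 + K2)%:E)%E.
Proof.
move=> /covnum_leP[l1 cover1 le1] /covnum_leP[l2 cover2 le2].
apply/covnum_leP; exists (l1 ++ l2); last by rewrite size_cat natrD lerD.
by move=> w [/cover1|/cover2]; rewrite has_cat => -> //; rewrite orbT.
Qed.

Lemma covnum_bigcup_le s A (P : seq T) (B : T -> set T) K :
  A `<=` \bigcup_(p in [set` P]) B p ->
  (forall p, p \in P -> (covnum s (A `&` B p) <= K%:E)%E) ->
  (covnum s A <= ((size P)%:R * K)%:E)%E.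
Proof.
elim: P A => [|p P IH] A A_sub le_K.
  by rewrite mul0r; apply/covnum_leP; exists [::] => // w /A_sub[].
have A_split : A `<=` (A `&` B p) `|` (A `\` B p).
  by move=> w Aw; case: (pselect (B p w)) => ?; [left|right].
apply: le_trans (covnumS _ A_split) _.
rewrite /= -addn1 natrD mulrDl mul1r addrC; apply: covnumU_le; first exact/le_K/mem_head.
apply: IH => [w [/A_sub[q /= ] ]|q qP].
  by rewrite inE => /orP[/eqP->|qP] //; exists q.
by apply: le_trans (le_K q _); [apply: covnumS => w [[]]|rewrite inE qP orbT].
Qed.
End CoveringNumbers.

Section Packing.
Variables (R : realType) (T : metricType R).
Implicit Types (d s : R) (A : set T) (P l : seq T).

Definition separated d P := uniq P /\ {in P &, forall p q, p != q -> d <= mdist p q}.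

Lemma separated_size_le d A P l : separated d P -> (forall p, p \in P -> A p) ->
  covers (d / 2) A l -> (size P <= size l)%N.
Proof.
move=> [uP sepP] PA cover_l; pose near (p c : T) := mdist c p < d / 2.
have size_le : (size P <= \sum_(p <- P) count (near p) l)%N.
  rewrite -sum1_size big_seq [leqRHS]big_seq; apply: leq_sum => p pP.
  by rewrite -has_count; apply/cover_l/PA.
apply: leq_trans size_le (sum_count_le_size l uP _) => c p q pP qP cp cq.
apply/eqP/negPn/negP => neq_pq.
have := sepP p q pP qP neq_pq; have := metric_triangle p c q.
rewrite (metric_sym p c) /near in cp cq *; lra.
Qed.

Lemma exists_maximal_separated d A N : 0 < d ->
  (forall P, separated d P -> (forall p, p \in P -> A p) -> (size P <= N)%N) ->
  exists P, [/\ separated d P, forall p, p \in P -> A p &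
                A `<=` \bigcup_(p in [set` P]) oball p d].
Proof.
move=> d_gt0 size_le.
pose packing n := `[< exists2 P, size P = n & separated d P /\ forall p, p \in P -> A p >].
have packing0 : packing 0%N by apply/asboolP; exists [::].
have packing_le n : packing n -> (n <= N)%N.
  by move=> /asboolP[P <- [sepP PA]]; apply: size_le.
have [n /asboolP[P <- [sepP PA]] P_max] := ex_maxnP (ex_intro packing 0%N packing0) packing_le.
exists P; split=> // w Aw; apply: contrapT => w_far.
have far p : p \in P -> d <= mdist p w.
  by move=> pP; rewrite leNgt; apply/negP => pw; apply: w_far; exists p.
have wP : w \notin P by apply/negP => /far; rewrite mdistxx leNgt d_gt0.
suff : packing (size (rcons P w)) by move/P_max; rewrite size_rcons ltnn.
case: sepP => uP sepP; apply/asboolP; exists (rcons P w) => //; split; last first.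
  by move=> p; rewrite mem_rcons inE => /orP[/eqP->|/PA].
split; first by rewrite rcons_uniq wP uP.
move=> p q; rewrite !mem_rcons !inE => /orP[/eqP->|pP] /orP[/eqP->|qP] //.
- by rewrite eqxx.
- by rewrite metric_sym => _; apply: far.
- by move=> _; apply: far.
- exact: sepP.
Qed.

Lemma separated_mul_le s rho C K K1 A P : 0 <= C -> separated (2 * (rho + s)) P ->
  (forall p, p \in P -> oball p rho `<=` A) ->
  (forall p K', p \in P -> (covnum s (oball p rho) <= K'%:E)%E -> K <= C * K') ->
  (covnum s A <= K1%:E)%E -> (size P)%:R * K <= C * K1.
Proof.
move=> C_ge0 [uP sepP] PA K_le /covnum_leP[l cover_l le_l].
pose near (p c : T) := mdist p c < rho + s.
have K_le_count p : p \in P -> K <= C * (count (near p) l)%:R.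
  move=> pP; apply: (K_le p _ pP); apply/covnum_leP; exists [seq c <- l | near p c].
    move=> w pw; have /hasP[c cl cw] := cover_l w (PA p pP w pw).
    apply/hasP; exists c => //; rewrite mem_filter cl andbT /near.
    have := metric_triangle p w c; move: pw; rewrite /oball /= (metric_sym w c); lra.
  by rewrite size_filter.
have count_le : (\sum_(p <- P) count (near p) l <= size l)%N.
  apply: sum_count_le_size => // c p q pP qP; rewrite /near => pc qc.
  apply/eqP/negPn/negP => neq_pq; have := sepP p q pP qP neq_pq.
  have := metric_triangle p c q; rewrite (metric_sym c q); lra.
rewrite mulr_natl -iter_addr_0 -count_predT -big_const_seq /=. (* = \sum_(p <- P) K *)
apply: le_trans (_ : \sum_(p <- P) C * (count (near p) l)%:R <= _).
  by rewrite big_seq [leRHS]big_seq; apply: ler_sum => p; apply: K_le_count.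
rewrite -mulr_sumr -natr_sum; apply: ler_wpM2l => //.
by apply: le_trans le_l; rewrite ler_nat.
Qed.
End Packing.

Section DoublingEstimates.
Variables (R : realType) (T : metricType R) (x : T) (c a r0 M : R).
Hypothesis c_ge0 : 0 <= c.
Hypothesis homogeneous : forall (R0 rho s : R) (y z : T), 0 < s -> s <= rho -> rho <= R0 ->
  R0 <= a -> oball x R0 y -> oball x R0 z ->
  (covnum s (oball y rho) <= c%:E * covnum s (oball z rho))%E.
Hypothesis r0_gt0 : 0 < r0.
Hypothesis covnum_half_cball : forall rho : R, 0 < rho -> rho < r0 ->
  (covnum (rho / 2) (cball x rho) <= M%:E)%E.
Implicit Types (r rho sig s K : R) (p : T) (P : seq T).

Lemma M_ge0 : 0 <= M.
Proof.
have half_r0_gt0 : 0 < r0 / 2 by move: r0_gt0; lra.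
have half_r0_lt : r0 / 2 < r0 by move: r0_gt0; lra.
by rewrite -lee_fin (le_trans (covnum_ge0 _ _) (covnum_half_cball half_r0_gt0 half_r0_lt)).
Qed.

Lemma homogeneous_le R0 rho s y z K : 0 < s -> s <= rho -> rho <= R0 -> R0 <= a ->
  oball x R0 y -> oball x R0 z -> (covnum s (oball z rho) <= K%:E)%E ->
  (covnum s (oball y rho) <= (c * K)%:E)%E.
Proof.
move=> s_gt0 s_le rho_le R0_le xy xz le_K.
by apply: le_trans (homogeneous s_gt0 s_le rho_le R0_le xy xz) _; rewrite EFinM lee_wpmul2l.
Qed.

Lemma covnum_le_M s rho A : 0 < rho -> rho < r0 -> rho / 2 <= s ->
  A `<=` cball x rho -> (covnum s A <= M%:E)%E.
Proof.
move=> rho_gt0 rho_lt s_ge A_sub; apply: le_trans (covnumS _ A_sub) _.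
exact: le_trans (le_covnum_radius _ s_ge) (covnum_half_cball rho_gt0 rho_lt).
Qed.

Lemma covnum_oballI_le r rho s p K : 0 < s -> s <= rho -> r + rho <= a ->
  (covnum s (oball x rho) <= K%:E)%E ->
  (covnum s (oball x r `&` oball p rho) <= (c * K)%:E)%E.
Proof.
move=> s_gt0 s_le ra le_K.
have [[w [xw pw]]|disjoint] := pselect (exists w, oball x r w /\ oball p rho w).
  have r_gt0 : 0 < r := le_lt_trans (mdist_ge0 x w) xw.
  have xp : oball x (r + rho) p.
    have := metric_triangle x w p; move: xw pw; rewrite /oball /= (metric_sym p w); lra.
  have xx : oball x (r + rho) x by rewrite /oball /= mdistxx; lra.
  apply: le_trans (covnumS _ (@subIsetr _ _ _)) _.
  by apply: homogeneous_le xp xx le_K => //; lra.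
apply/covnum_leP; exists [::] => [w [xw pw]|]; first by case: disjoint; exists w.
by rewrite mulr_ge0 // -lee_fin (le_trans (covnum_ge0 _ _) le_K).
Qed.

Lemma covnum_doubling s rho K : 0 < s -> s <= rho / 2 -> rho < r0 -> 2 * rho <= a ->
  (covnum s (oball x (rho / 2)) <= K%:E)%E -> (covnum s (oball x rho) <= (M * (c * K))%:E)%E.
Proof.
move=> s_gt0 s_le rho_lt rho_le le_K; have rho_gt0 : 0 < rho by lra.
have /covnum_leP[l cover_l size_l] := covnum_half_cball rho_gt0 rho_lt.
have cK_ge0 : 0 <= c * K by rewrite mulr_ge0 // -lee_fin (le_trans (covnum_ge0 _ _) le_K).
have oball_sub : oball x rho `<=` \bigcup_(p in [set` l]) oball p (rho / 2).
  by move=> w /ltW/cover_l/hasP[p pl pw]; exists p.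
have oballI_le p : p \in l -> (covnum s (oball x rho `&` oball p (rho / 2)) <= (c * K)%:E)%E.
  by move=> _; apply: covnum_oballI_le le_K => //; lra.
apply: le_trans (covnum_bigcup_le oball_sub oballI_le) _.
by rewrite lee_fin ler_wpM2r.
Qed.

Lemma covnum_oball_finite s rho : 0 < s -> 0 < rho -> rho < r0 -> 2 * rho <= a ->
  exists K, (covnum s (oball x rho) <= K%:E)%E.
Proof.
move=> s_gt0 rho_gt0 rho_lt rho_a.
have : rho <= (Num.Def.trunc (rho / s)).+1%:R * s.
  by rewrite -ler_pdivrMr // ltW // truncnS_gt.
move: (Num.Def.trunc (rho / s)).+1 => n.
elim: n rho rho_gt0 rho_lt rho_a => [|n IH] rho rho_gt0 rho_lt rho_a rho_le.
  by move: rho_le; rewrite mul0r; lra.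
have [rho_small|rho_big] := lerP rho (2 * s).
  by exists M; apply: (covnum_le_M rho_gt0 rho_lt) => [|w /ltW]; first lra.
move: rho_le; rewrite -addn1 natrD mulrDl mul1r => rho_le.
have [K le_K] := IH (rho / 2) ltac:(lra) ltac:(lra) ltac:(lra) ltac:(lra).
by exists (M * (c * K)); apply: covnum_doubling le_K => //; lra.
Qed.

Lemma covnum_oball_nat s rho : 0 < s -> 0 < rho -> rho < r0 -> 2 * rho <= a ->
  exists2 n : nat, covnum s (oball x rho) = n%:R%:E & (0 < n)%N.
Proof.
move=> s_gt0 rho_gt0 rho_lt rho_a.
have [K /covnum_attained[l cover_l ->]] := covnum_oball_finite s_gt0 rho_gt0 rho_lt rho_a.
exists (size l) => //; have := cover_l x; rewrite /oball /= mdistxx => /(_ rho_gt0).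
by case: l {cover_l}.
Qed.

Lemma covnum_le_mul r sig s K2 K3 : 0 < s -> s <= sig -> sig <= r -> 2 * r <= a ->
  (covnum sig (oball x r) <= K2%:E)%E -> (covnum s (oball x sig) <= K3%:E)%E ->
  (covnum s (oball x r) <= (K2 * (c * K3))%:E)%E.
Proof.
move=> s_gt0 s_le sig_le r_a /covnum_leP[l cover_l size_l] le_K3.
have cK3_ge0 : 0 <= c * K3 by rewrite mulr_ge0 // -lee_fin (le_trans (covnum_ge0 _ _) le_K3).
have oball_sub : oball x r `<=` \bigcup_(p in [set` l]) oball p sig.
  by move=> w /cover_l/hasP[p pl pw]; exists p.
have oballI_le p : p \in l -> (covnum s (oball x r `&` oball p sig) <= (c * K3)%:E)%E.
  by move=> _; apply: covnum_oballI_le le_K3 => //; lra.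
apply: le_trans (covnum_bigcup_le oball_sub oballI_le) _.
by rewrite lee_fin ler_wpM2r.
Qed.

Lemma covnum_le_net r sig P : 0 < sig -> sig <= r / 2 -> r < r0 -> 2 * r <= a ->
  (forall p, p \in P -> oball x (r / 2) p) ->
  oball x (r / 2) `<=` \bigcup_(p in [set` P]) oball p (2 * sig) ->
  (covnum sig (oball x r) <= (M * (c * ((size P)%:R * (c * M))))%:E)%E.
Proof.
move=> sig_gt0 sig_le r_lt r_a PA net_cover.
apply: covnum_doubling => //; apply: covnum_bigcup_le net_cover _ => p pP.
apply: le_trans (covnumS _ (@subIsetr _ _ _)) _.
have xp : oball x r p by move: (PA p pP); rewrite /oball /=; lra.
have xx : oball x r x by rewrite /oball /= mdistxx; lra.
have le_M : (covnum sig (oball x (2 * sig)) <= M%:E)%E.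
  by apply: (covnum_le_M (rho := 2 * sig)) => [||| w /ltW //]; lra.
by apply: homogeneous_le xp xx le_M; lra.
Qed.

Lemma covnum_le_recentred r sig s p K : oball x r p -> 0 < s -> s <= sig / 2 ->
  sig <= r -> sig < r0 -> 2 * sig <= a -> r <= a ->
  (covnum s (oball p (sig / 2)) <= K%:E)%E ->
  (covnum s (oball x sig) <= (M * (c * (c * K)))%:E)%E.
Proof.
move=> xp s_gt0 s_le sig_le sig_lt sig_a r_a le_K.
have xx : oball x r x by rewrite /oball /= mdistxx; lra.
by apply: covnum_doubling => //; apply: homogeneous_le xx xp le_K; lra.
Qed.

Lemma covnum_mul_le_nondegenerate r sig s (n1 n2 n3 : nat) :
  0 < s -> s <= sig / 2 -> sig <= r / 2 -> r < r0 -> 2 * r <= a ->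
  covnum s (oball x r) = n1%:R%:E -> covnum sig (oball x r) = n2%:R%:E ->
  covnum s (oball x sig) = n3%:R%:E -> n2%:R * n3%:R <= M ^+ 3 * c ^+ 4 * n1%:R.
Proof.
move=> s_gt0 s_le sig_le r_lt r_a E1 E2 E3; have sig_gt0 : 0 < sig by lra.
have M_ge0 := M_ge0.
have half_r_gt0 : 0 < r / 2 by lra.
have [K /covnum_leP[l cover_l _]] := covnum_oball_finite sig_gt0 half_r_gt0 ltac:(lra) ltac:(lra).
have packing_le P : separated (2 * sig) P -> (forall p, p \in P -> oball x (r / 2) p) ->
    (size P <= size l)%N.
  by move=> sepP PA; apply: separated_size_le sepP PA _; rewrite mulrAC divff ?mul1r.
have two_sig_gt0 : 0 < 2 * sig by lra.
have [P [sepP PA net_cover]] := exists_maximal_separated two_sig_gt0 packing_le.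
have n2_le : n2%:R <= M * (c * ((size P)%:R * (c * M))).
  by rewrite -lee_fin -E2; exact: covnum_le_net.
have sepP' : separated (2 * (sig / 2 + s)) P.
  by case: sepP => uP sepP; split=> // p q pP qP /(sepP p q pP qP); apply: le_trans; lra.
have Pn3_le : (size P)%:R * n3%:R <= M * (c * c) * n1%:R.
  apply: (separated_mul_le (A := oball x r) _ sepP') => [||p K' pP le_K'|]; last by rewrite E1.
  - by rewrite !mulr_ge0.
  - move=> p pP w; have := metric_triangle x p w; move: (PA p pP).
    rewrite /oball /=; lra.
  - have xp : oball x r p by move: (PA p pP); rewrite /oball /=; lra.
    rewrite -lee_fin -E3 -!mulrA; apply: covnum_le_recentred xp _ _ _ _ _ _ le_K' => //; lra.
have n2n3_le := ler_wpM2r (ler0n _ n3) n2_le.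
rewrite (_ : M * _ * _ = M * c * c * M * ((size P)%:R * n3%:R)) in n2n3_le; last by ring.
apply: le_trans n2n3_le _.
have -> : M ^+ 3 * c ^+ 4 * n1%:R = M * c * c * M * (M * (c * c) * n1%:R) by ring.
by apply: ler_wpM2l Pn3_le; rewrite !mulr_ge0.
Qed.

Lemma covnum_mul_le r sig s (n1 n2 n3 : nat) :
  0 < s -> s <= sig -> sig <= r -> r < r0 -> 2 * r <= a ->
  covnum s (oball x r) = n1%:R%:E -> covnum sig (oball x r) = n2%:R%:E ->
  covnum s (oball x sig) = n3%:R%:E -> n2%:R * n3%:R <= (M + M ^+ 3 * c ^+ 4) * n1%:R.
Proof.
move=> s_gt0 s_le sig_le r_lt r_a E1 E2 E3; have M_ge0 := M_ge0.
have M_n1_le : M * n1%:R <= (M + M ^+ 3 * c ^+ 4) * n1%:R.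
  by rewrite ler_wpM2r // lerDl mulr_ge0 // exprn_ge0.
have [sig_small|sig_big] := lerP sig (r / 2); last first.
  apply: le_trans M_n1_le; apply: ler_pM => //.
    by rewrite -lee_fin -E2; apply: (covnum_le_M (rho := r)) => [||| w /ltW //]; lra.
  by rewrite -lee_fin -E3 -E1; apply: covnumS => w; rewrite /oball /=; lra.
have [s_small|s_big] := lerP s (sig / 2); last first.
  apply: le_trans M_n1_le; rewrite mulrC; apply: ler_pM => //.
    by rewrite -lee_fin -E3; apply: (covnum_le_M (rho := sig)) => [||| w /ltW //]; lra.
  by rewrite -lee_fin -E2 -E1; apply: le_covnum_radius.
apply: le_trans (covnum_mul_le_nondegenerate _ _ _ _ _ E1 E2 E3) _ => //.
by rewrite ler_wpM2r // lerDr.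
Qed.

Lemma norm_lne_covnum_le r sig s : 0 < s -> s <= sig -> sig <= r -> r < r0 -> 2 * r <= a ->
  (`|lne (covnum s (oball x r)) - lne (covnum s (oball x sig)) - lne (covnum sig (oball x r))|
     <= (`|ln c| + `|ln (M + M ^+ 3 * c ^+ 4)|)%:E)%E.
Proof.
move=> s_gt0 s_le sig_le r_lt r_a.
have sig_gt0 : 0 < sig by lra.
have r_gt0 : 0 < r by lra.
have [n1 E1 n1_gt0] := covnum_oball_nat s_gt0 r_gt0 r_lt r_a.
have [n2 E2 n2_gt0] := covnum_oball_nat sig_gt0 r_gt0 r_lt r_a.
have [n3 E3 n3_gt0] := covnum_oball_nat s_gt0 sig_gt0 ltac:(lra) ltac:(lra).
rewrite E1 E2 E3 !lne_EFin ?ltr0n // -!EFinB abse_EFin lee_fin.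
apply: norm_ln_quotient_le; rewrite ?ltr0n // [_ * n2%:R]mulrC.
  rewrite -lee_fin -E1 mulrCA.
  by apply: (covnum_le_mul s_gt0 s_le sig_le r_a); rewrite ?E2 ?E3.
exact: (covnum_mul_le s_gt0 s_le sig_le r_lt r_a E1 E2 E3).
Qed.
End DoublingEstimates.

Lemma covnum_homogeneous (R : realType) (T : metricType R) (x : T) (c a : R) :
  (forall (r lam mu : R) (y z : T),
     0 < r -> r <= a -> 0 < lam -> lam <= 1 -> 0 < mu -> mu <= 1 ->
     oball x r y -> oball x r z ->
     (covnum (lam * mu * r) (oball y (lam * r))
        <= c%:E * covnum (lam * mu * r) (oball z (lam * r)))%E) ->
  forall (R0 rho s : R) (y z : T), 0 < s -> s <= rho -> rho <= R0 -> R0 <= a ->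
    oball x R0 y -> oball x R0 z ->
    (covnum s (oball y rho) <= c%:E * covnum s (oball z rho))%E.
Proof.
move=> homog R0 rho s y z s_gt0 s_le rho_le R0_le xy xz.
have rho_gt0 : 0 < rho by lra.
have R0_gt0 : 0 < R0 by lra.
have lam_gt0 : 0 < rho / R0 by rewrite divr_gt0.
have mu_gt0 : 0 < s / rho by rewrite divr_gt0.
have lam_le1 : rho / R0 <= 1 by rewrite ler_pdivrMr // mul1r.
have mu_le1 : s / rho <= 1 by rewrite ler_pdivrMr // mul1r.
have := homog R0 (rho / R0) (s / rho) y z R0_gt0 R0_le lam_gt0 lam_le1 mu_gt0 mu_le1 xy xz.
have -> : rho / R0 * (s / rho) * R0 = s by field; rewrite !gt_eqF.
by have -> : rho / R0 * R0 = rho by field; rewrite gt_eqF.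
Qed.

Theorem proposition4p5 (R : realType) (T : metricType R) (x : T) :
  (exists (c a : R), 1 <= c /\ 0 < a /\ a <= 1 /\
     forall (r lam mu : R) (y z : T),
       0 < r -> r <= a -> 0 < lam -> lam <= 1 -> 0 < mu -> mu <= 1 ->
       oball x r y -> oball x r z ->
       (covnum (lam * mu * r) (oball y (lam * r))
          <= c%:E * covnum (lam * mu * r) (oball z (lam * r)))%E) ->
  (forall lam : R, 0 < lam ->
     exists (r0 M : R), 0 < r0 /\
       forall r : R, 0 < r -> r < r0 ->
         (covnum (lam * r) (cball x r) <= M%:E)%E) ->
  exists (t0 M : R), forall t h k : R, t0 < t -> 0 < h -> 0 < k ->
    (`|dgfun x t h k| <= M%:E)%E.
Proof.
move=> [c [a [c_ge1 [a_gt0 [_ homog]]]]] bounded.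
have [r0 [M [r0_gt0 bounded_half]]] := bounded 2^-1 ltac:(by rewrite invr_gt0).
have half_cball rho : 0 < rho -> rho < r0 -> (covnum (rho / 2) (cball x rho) <= M%:E)%E.
  by rewrite mulrC; apply: bounded_half.
have c_ge0 : 0 <= c by lra.
pose rs := Num.min r0 (a / 2); have rs_gt0 : 0 < rs by rewrite lt_min r0_gt0 /=; lra.
exists (- ln rs), (`|ln c| + `|ln (M + M ^+ 3 * c ^+ 4)|) => t h k t_gt h_gt0 k_gt0.
have : expR (- t) < rs by rewrite -[ltRHS]lnK ?posrE // ltr_expR; lra.
rewrite lt_min => /andP[r_lt r_a].
rewrite /dgfun /gfun -(addrA t h k).
apply: (norm_lne_covnum_le c_ge0 (covnum_homogeneous homog) r0_gt0 half_cball);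
  rewrite ?expR_gt0 ?ler_expR //; lra.
Qed.
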